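(* Let $\alpha\in\{l_1,r\}$ and let $\{\rho_{a|x}\}_{a\in\{0,1\},x\in\{1,2,3\}}$ be a qubit assemblage admitting an LHS model. Then $$S:=\sum_{a,b=0}^{1}\ \sum_{(i,j,k)}p(a|i)\,p(b|j)\,C^\alpha_k(\rho'_{a|i})\,C^\alpha_k(\rho'_{b|j})\;\le\;2\Omega_\alpha=4,$$ where the inner sum runs over all ordered triples $(i,j,k)$ of pairwise distinct elements of $\{1,2,3\}$.
   Context: $\sigma_1,\sigma_2,\sigma_3$ are the Pauli matrices; ''basis $k$'' is the eigenbasis $\{|e^k_0\rangle,|e^k_1\rangle\}$ of $\sigma_k$. Coherence measures: $C^{l_1}_k(\rho)=\sum_{m\ne n}|\langle e^k_m|\rho|e^k_n\rangle|$ and $C^r_k(\rho)=S(\Delta_k(\rho))-S(\rho)$, with $S$ the von Neumann entropy (base 2) and $\Delta_k$ the complete dephasing in basis $k$; $\Omega_{l_1}=\Omega_r=2$. A qubit assemblage is a family of positive semidefinite operators $\rho_{a|x}$ on $\mathbb C^2$ ($a\in\{0,1\}$ outcome, $x\in\{1,2,3\}$ setting) with $\operatorname{Tr}\sum_a\rho_{a|x}=1$ for each $x$; $p(a|x)=\operatorname{Tr}\rho_{a|x}$ and $\rho'_{a|x}=\rho_{a|x}/p(a|x)$ (terms with $p(a|x)=0$ contribute zero). The assemblage admits an LHS (local hidden state) model if there exist a finite set of hidden variables $\lambda$ with probabilities $P_\lambda$, conditional probabilities $p(a|x,\lambda)\ge0$ with $\sum_a p(a|x,\lambda)=1$, and qubit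 density matrices $\rho_\lambda$ such that $\rho_{a|x}=\sum_\lambda P_\lambda\,p(a|x,\lambda)\,\rho_\lambda$ for all $a,x$. *)

From Stdlib Require Import Reals Lra.
Open Scope R_scope.

Record Cx := mkC { re : R; im : R }.
Definition C0 : Cx := mkC 0 0.
Definition C1 : Cx := mkC 1 0.
Definition Cadd (z w : Cx) : Cx := mkC (re z + re w) (im z + im w).
Definition Cmul (z w : Cx) : Cx :=
  mkC (re z * re w - im z * im w) (re z * im w + im z * re w).
Definition Cconj (z : Cx) : Cx := mkC (re z) (- im z).
Definition Cscal (r : R) (z : Cx) : Cx := mkC (r * re z) (r * im z).
Definition Cabs (z : Cx) : R := sqrt (re z * re z + im z * im z).

Record Vec2 := mkV { v0 : Cx; v1 : Cx }.
Record Mat2 := mkM { m00 : Cx; m01 : Cx; m10 : Cx; m11 : Cx }.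

Definition ent (A : Mat2) (m n : bool) : Cx :=
  match m, n with
  | false, false => m00 A | false, true => m01 A
  | true, false => m10 A | true, true => m11 A end.
Definition vent (v : Vec2) (m : bool) : Cx := if m then v1 v else v0 v.

Definition Mzero : Mat2 := mkM C0 C0 C0 C0.
Definition Madd (A B : Mat2) : Mat2 :=
  mkM (Cadd (m00 A) (m00 B)) (Cadd (m01 A) (m01 B))
      (Cadd (m10 A) (m10 B)) (Cadd (m11 A) (m11 B)).
Definition Mscal (r : R) (A : Mat2) : Mat2 :=
  mkM (Cscal r (m00 A)) (Cscal r (m01 A)) (Cscal r (m10 A)) (Cscal r (m11 A)).
Definition Mmul (A B : Mat2) : Mat2 :=
  mkM (Cadd (Cmul (m00 A) (m00 B)) (Cmul (m01 A) (m10 B)))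
      (Cadd (Cmul (m00 A) (m01 B)) (Cmul (m01 A) (m11 B)))
      (Cadd (Cmul (m10 A) (m00 B)) (Cmul (m11 A) (m10 B)))
      (Cadd (Cmul (m10 A) (m01 B)) (Cmul (m11 A) (m11 B))).
Definition Mtr (A : Mat2) : Cx := Cadd (m00 A) (m11 A).
Definition Mdet (A : Mat2) : Cx :=
  Cadd (Cmul (m00 A) (m11 A)) (Cscal (-1) (Cmul (m01 A) (m10 A))).
Definition outer (u v : Vec2) : Mat2 :=
  mkM (Cmul (v0 u) (Cconj (v0 v))) (Cmul (v0 u) (Cconj (v1 v)))
      (Cmul (v1 u) (Cconj (v0 v))) (Cmul (v1 u) (Cconj (v1 v))).
Definition braket (u : Vec2) (A : Mat2) (v : Vec2) : Cx :=
  Cadd (Cadd (Cmul (Cconj (v0 u)) (Cmul (m00 A) (v0 v)))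
             (Cmul (Cconj (v0 u)) (Cmul (m01 A) (v1 v))))
       (Cadd (Cmul (Cconj (v1 u)) (Cmul (m10 A) (v0 v)))
             (Cmul (Cconj (v1 u)) (Cmul (m11 A) (v1 v)))).

Definition hermitian (A : Mat2) : Prop :=
  forall m n : bool, ent A m n = Cconj (ent A n m).
Definition psd (A : Mat2) : Prop :=
  hermitian A /\ forall v : Vec2, 0 <= re (braket v A v).
Definition density (A : Mat2) : Prop := psd A /\ Mtr A = C1.

Inductive setting := s1 | s2 | s3.

Definition Ci : Cx := mkC 0 1.
Definition Cmi : Cx := mkC 0 (-1).
Definition Cm1 : Cx := mkC (-1) 0.
Definition sigma (k : setting) : Mat2 :=
  match k with
  | s1 => mkM C0 C1 C1 C0
  | s2 => mkM C0 Cmi Ci C0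
  | s3 => mkM C1 C0 C0 Cm1 end.

Definition h : Cx := mkC (/ sqrt 2) 0.
Definition hi : Cx := mkC 0 (/ sqrt 2).
(* e^k_0 : eigenvector of sigma_k for eigenvalue +1, e^k_1 : for eigenvalue -1 *)
Definition ebasis (k : setting) (m : bool) : Vec2 :=
  match k, m with
  | s1, false => mkV h h
  | s1, true => mkV h (Cscal (-1) h)
  | s2, false => mkV h hi
  | s2, true => mkV h (Cscal (-1) hi)
  | s3, false => mkV C1 C0
  | s3, true => mkV C0 C1 end.

Definition log2 (x : R) : R := ln x / ln 2.
Definition eta (x : R) : R := if Rle_dec x 0 then 0 else x * log2 x.
(* eigenvalues of a 2x2 Hermitian matrix: roots of lambda^2 - tr A lambda + det A *)
Definition eig_plus (A : Mat2) : R :=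
  (re (Mtr A) + sqrt (re (Mtr A) * re (Mtr A) - 4 * re (Mdet A))) / 2.
Definition eig_minus (A : Mat2) : R :=
  (re (Mtr A) - sqrt (re (Mtr A) * re (Mtr A) - 4 * re (Mdet A))) / 2.
Definition vN (A : Mat2) : R := - (eta (eig_plus A) + eta (eig_minus A)).

Definition dephase (k : setting) (A : Mat2) : Mat2 :=
  Madd (Mmul (Mmul (outer (ebasis k false) (ebasis k false)) A)
             (outer (ebasis k false) (ebasis k false)))
       (Mmul (Mmul (outer (ebasis k true) (ebasis k true)) A)
             (outer (ebasis k true) (ebasis k true))).

Inductive cmeasure := l1 | rel.

Definition coh_l1 (k : setting) (A : Mat2) : R :=
  Cabs (braket (ebasis k false) A (ebasis k true))
  + Cabs (braket (ebasis k true) A (ebasis k false)).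
Definition coh_r (k : setting) (A : Mat2) : R := vN (dephase k A) - vN A.
Definition coh (alpha : cmeasure) (k : setting) (A : Mat2) : R :=
  match alpha with l1 => coh_l1 k A | rel => coh_r k A end.
Definition Omega (alpha : cmeasure) : R := 2.

(* outcome a in {0,1} encoded as bool (false = 0, true = 1) *)
Definition Assemblage := bool -> setting -> Mat2.

Definition is_assemblage (rho : Assemblage) : Prop :=
  (forall a x, psd (rho a x)) /\
  (forall x, Mtr (Madd (rho false x) (rho true x)) = C1).

Definition prob (rho : Assemblage) (a : bool) (x : setting) : R := re (Mtr (rho a x)).
(* normalised conditional state (zero matrix when p(a|x) = 0; such terms are
   multiplied by p(a|x) = 0 anyway) *)
Definition cond_state (rho : Assemblage) (a : bool) (x : setting) : Mat2 :=
  if Req_EM_T (prob rho a x) 0 then Mzero else Mscal (/ prob rho a x) (rho a x).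

Fixpoint Rsum (n : nat) (f : nat -> R) : R :=
  match n with O => 0 | S n' => Rsum n' f + f n' end.
Fixpoint Msum (n : nat) (f : nat -> Mat2) : Mat2 :=
  match n with O => Mzero | S n' => Madd (Msum n' f) (f n') end.

(* LHS model with finitely many hidden variables lambda in {0,...,n-1} *)
Definition has_LHS (rho : Assemblage) : Prop :=
  exists (n : nat) (P : nat -> R) (pl : nat -> bool -> setting -> R)
         (sig : nat -> Mat2),
    (forall l, (l < n)%nat -> 0 <= P l) /\
    Rsum n P = 1 /\
    (forall l a x, (l < n)%nat -> 0 <= pl l a x) /\
    (forall l x, (l < n)%nat -> pl l false x + pl l true x = 1) /\
    (forall l, (l < n)%nat -> density (sig l)) /\
    (forall a x, rho a x = Msum n (fun l => Mscal (P l * pl l a x) (sig l))).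

Definition sumb (f : bool -> R) : R := f false + f true.
Definition sum3 (f : setting -> R) : R := f s1 + f s2 + f s3.
Definition setting_eqb (x y : setting) : bool :=
  match x, y with s1, s1 | s2, s2 | s3, s3 => true | _, _ => false end.
Definition pw_distinct (i j k : setting) : bool :=
  negb (setting_eqb i j) && negb (setting_eqb j k) && negb (setting_eqb i k).

Definition S_quantity (alpha : cmeasure) (rho : Assemblage) : R :=
  sumb (fun a => sumb (fun b =>
    sum3 (fun i => sum3 (fun j => sum3 (fun k =>
      if pw_distinct i j k then
        prob rho a i * prob rho b j
        * coh alpha k (cond_state rho a i) * coh alpha k (cond_state rho b j)
      else 0))))).

(* A Hermitian 2x2 matrix A has real (unnormalised) Bloch coordinates
   r_j(A) = Re tr (sigma_j A); let n_k(A) = sqrt (r_i(A)^2 + r_j(A)^2) be the length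
   of its Bloch component orthogonal to sigma_k, {i, j, k} = {1, 2, 3}.
   1. For a positive M with trace p, p C_k(M / p) <= n_k(M).  For l1 this is an
      equality; for the relative entropy of coherence it is the binary-entropy
      estimate H(|r_k|) - H(|r|) <= sqrt (|r|^2 - r_k^2), proved by calculus on
      Phi y = (1+y) ln(1+y) + (1-y) ln(1-y) (first part of the file).
   2. n_k is a seminorm, so an LHS model rho_{a|x} = sum_l P_l p(a|x,l) sigma_l gives
      n_k(rho_{0|i}) + n_k(rho_{1|i}) <= Y_k := sum_l P_l n_k(sigma_l).
   3. By Jensen and sum_k n_k(sigma)^2 = 2 |r(sigma)|^2 <= 2 for a density matrix,
      Y_1^2 + Y_2^2 + Y_3^2 <= 2.
   4. S <= 2 sum_k (n_k(rho_{0|i}) + n_k(rho_{1|i})) (n_k(rho_{0|j}) + n_k(rho_{1|j}))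
      over {i, j, k} = {1, 2, 3}, which is at most 2 (Y_1^2 + Y_2^2 + Y_3^2) <= 4. *)

From Stdlib Require Import Reals Lra Lia.
From Coquelicot Require Import Coquelicot.
(* Imported after Coquelicot so that C0, C1 denote the complex constants of Defs. *)
From Pilot Require Import Defs.
Open Scope R_scope.

Lemma nondecreasing_of_deriv (f df : R -> R) (a b : R) : a <= b ->
  (forall x, a <= x <= b -> is_derive f x (df x)) ->
  (forall x, a <= x <= b -> 0 <= df x) -> f a <= f b.
Proof.
  intros Hab Hder Hpos. destruct (Req_dec a b) as [->|Hne]; [lra|].
  destruct (MVT_cor3 f df a b) as [c [Hac [Hcb Hmvt]]]; [lra| |].
  - intros x Hax Hxb. apply is_derive_Reals, Hder; lra.
  - rewrite Hmvt. assert (0 <= df c) by (apply Hpos; lra). nra.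
Qed.

Lemma ln_le_sub1 (y : R) : 0 < y -> ln y <= y - 1.
Proof. intros Hy. pose proof (exp_ineq1_le (ln y)) as H. rewrite exp_ln in H; lra. Qed.

Lemma ln2_pos : 0 < ln 2.
Proof. pose proof ln_lt_2; lra. Qed.

Lemma le_of_le_sqrt_eps (u c t delta : R) : 0 < c -> 0 <= t -> 0 < delta ->
  (forall eps, 0 < eps -> eps <= delta -> u <= c * sqrt (t*t + eps)) -> u <= c * t.
Proof.
  intros Hc Ht Hd Hall. destruct (Rle_dec u (c * t)) as [Hle|Hgt]; [exact Hle|].
  exfalso. set (K := u / c).
  assert (HuK : u = c * K) by (unfold K; field; lra).
  assert (HtK : t < K) by (apply Rmult_lt_reg_l with c; lra).
  set (eps := Rmin delta ((K*K - t*t)/2)).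
  assert (He : 0 < eps) by (unfold eps; apply Rmin_glb_lt; nra).
  assert (HeK : eps <= (K*K - t*t)/2) by apply Rmin_r.
  assert (Hsqrt : sqrt (t*t + eps) < K).
  { rewrite <- (sqrt_square K) by lra. apply sqrt_lt_1; nra. }
  specialize (Hall eps He (Rmin_l _ _)). nra.
Qed.

(* Phi y = (1+y) ln(1+y) + (1-y) ln(1-y), i.e. 2 ln 2 times one minus the binary
   entropy of (1 +- y)/2 (lemma [Hbin_Phi]); dPhi is its derivative. *)
Definition Phi (y : R) : R := (1+y)*ln(1+y) + (1-y)*ln(1-y).
Definition dPhi (y : R) : R := ln(1+y) - ln(1-y).

Lemma Phi_deriv (y : R) : -1 < y < 1 -> is_derive Phi y (dPhi y).
Proof.
  intros Hy. unfold Phi, dPhi. auto_derive; [lra|].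
  replace (1 + - y) with (1 - y) by ring. field. lra.
Qed.

Lemma dPhi_nonneg (y : R) : 0 <= y < 1 -> 0 <= dPhi y.
Proof. intros Hy. unfold dPhi. assert (ln (1-y) <= ln (1+y)) by (apply ln_le; lra). lra. Qed.

Lemma Phi_nondecreasing (x y : R) : 0 <= x <= y -> y < 1 -> Phi x <= Phi y.
Proof.
  intros Hxy Hy. apply (nondecreasing_of_deriv Phi dPhi); [lra| |].
  - intros z Hz; apply Phi_deriv; lra.
  - intros z Hz; apply dPhi_nonneg; lra.
Qed.

Lemma Phi_le_2ln2 (y : R) : 0 <= y < 1 -> Phi y <= 2 * ln 2.
Proof.
  intros Hy. unfold Phi.
  assert (ln (1+y) <= ln 2) by (apply ln_le; lra).
  assert (0 <= ln (1+y)) by (rewrite <- ln_1; apply ln_le; lra).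
  assert (ln (1-y) <= 0) by (rewrite <- ln_1; apply ln_le; lra).
  nra.
Qed.

Lemma dPhi_0 : dPhi 0 = 0.
Proof. unfold dPhi. rewrite Rplus_0_r, Rminus_0_r. ring. Qed.

Lemma Phi_0 : Phi 0 = 0.
Proof. unfold Phi. rewrite Rplus_0_r, Rminus_0_r, ln_1. ring. Qed.

(* dPhi is convex on [0,1) with dPhi 0 = 0, hence dPhi y <= y dPhi'(y) there. *)
Lemma dPhi_below_tangent (y : R) : 0 <= y < 1 -> dPhi y <= y * (/(1+y) + /(1-y)).
Proof.
  intros Hy. set (g := fun y => y * (/(1+y) + /(1-y)) - dPhi y).
  enough (0 <= g y) by (unfold g in *; lra).
  replace 0 with (g 0) by (unfold g; rewrite dPhi_0; ring).
  apply (nondecreasing_of_deriv g (fun y => y * (/((1-y)*(1-y)) - /((1+y)*(1+y))))); [lra| |].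
  - intros z Hz. unfold g, dPhi. auto_derive; [lra|].
    replace (1 + - z) with (1 - z) by ring. field. lra.
  - intros z Hz. apply Rmult_le_pos; [lra|].
    assert (/((1+z)*(1+z)) <= /((1-z)*(1-z))) by (apply Rinv_le_contravar; nra). lra.
Qed.

Lemma dPhi_slope_nondecreasing (a b : R) : 0 < a <= b -> b < 1 -> dPhi a / a <= dPhi b / b.
Proof.
  intros Hab Hb.
  apply (nondecreasing_of_deriv (fun y => dPhi y / y)
           (fun y => (y * (/(1+y) + /(1-y)) - dPhi y) / (y*y))); [lra| |].
  - intros z Hz. unfold dPhi. auto_derive; [lra|].
    replace (1 + - z) with (1 - z) by ring. field. lra.
  - intros z Hz. apply Rdiv_le_0_compat; [|nra].
    pose proof (dPhi_below_tangent z). lra.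
Qed.

(* (1+c) ln(1+c) - (1-c) ln(1-c) >= 2 c ln 2 on [0,1), from two tangent-line
   bounds for ln at (1-c)/(1+c) and at 2/(1+c). *)
Lemma Phi_odd_part_ge (c : R) : 0 <= c < 1 ->
  2 * c * ln 2 <= (1+c)*ln(1+c) - (1-c)*ln(1-c).
Proof.
  intros Hc. set (A := ln (1+c)). set (B := ln (1-c)).
  assert (Hratio : 2*c/(1+c) <= A - B).
  { assert (Hq : 0 < (1-c)/(1+c)) by (apply Rdiv_lt_0_compat; lra).
    pose proof (ln_le_sub1 _ Hq) as Hln.
    unfold Rdiv in Hln. rewrite ln_mult, ln_Rinv in Hln by (try apply Rinv_0_lt_compat; lra).
    replace (2*c/(1+c)) with (1 - (1-c)/(1+c)) by (field; lra). unfold A, B. lra. }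
  assert (Hhalf : ln 2 - A <= (1-c)/(1+c)).
  { assert (Hq : 0 < 2/(1+c)) by (apply Rdiv_lt_0_compat; lra).
    pose proof (ln_le_sub1 _ Hq) as Hln.
    unfold Rdiv in Hln. rewrite ln_mult, ln_Rinv in Hln by (try apply Rinv_0_lt_compat; lra).
    replace ((1-c)/(1+c)) with (2 * /(1+c) - 1) by (field; lra). unfold A. lra. }
  assert (H1 : 2*c/(1+c) * (1-c) <= (A - B)*(1-c)) by (apply Rmult_le_compat_r; lra).
  assert (H2 : (ln 2 - A)*(2*c) <= (1-c)/(1+c)*(2*c)) by (apply Rmult_le_compat_r; lra).
  assert (E : 2*c/(1+c)*(1-c) = (1-c)/(1+c)*(2*c)) by (field; lra).
  lra.
Qed.

(* Derivative of M(c) = (Phi c - 2 ln 2 (1 - s)) / s with s = sqrt (1 - c^2); its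
   sign is that of (1+c) ln(1+c) - (1-c) ln(1-c) - 2 c ln 2. *)
Lemma chord_quotient_deriv (c : R) : 0 <= c < 1 ->
  is_derive (fun c => (Phi c - 2 * ln 2 * (1 - sqrt (1 - c*c))) / sqrt (1 - c*c)) c
    (((1+c)*ln(1+c) - (1-c)*ln(1-c) - 2*c*ln 2) / (sqrt (1 - c*c) ^ 3)).
Proof.
  intros Hc. set (s := sqrt (1 - c*c)). assert (Hs : 0 < s) by (apply sqrt_lt_R0; nra).
  assert (Hss : s * s = 1 - c*c) by (apply sqrt_sqrt; nra).
  unfold Phi. auto_derive; replace (1 + - (c*c)) with (1 - c*c) by ring; fold s.
  - repeat split; nra.
  - replace (1 + - c) with (1 - c) by ring. field [Hss]. lra.
Qed.

(* Phi lies above the curve 2 ln 2 (1 - sqrt (1 - c^2)), which meets it at 0 and 1: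
   the quotient M above is nondecreasing with M 0 = 0. *)
Lemma Phi_ge_circle (c : R) : 0 <= c < 1 -> 2 * ln 2 * (1 - sqrt (1 - c*c)) <= Phi c.
Proof.
  intros Hc.
  assert (Hs : 0 < sqrt (1 - c*c)) by (apply sqrt_lt_R0; nra).
  set (M := fun c => (Phi c - 2 * ln 2 * (1 - sqrt (1 - c*c))) / sqrt (1 - c*c)).
  assert (HM0 : M 0 = 0).
  { unfold M. rewrite Phi_0, Rmult_0_l, Rminus_0_r, sqrt_1. field. }
  assert (HM : M 0 <= M c).
  { apply (nondecreasing_of_deriv M
      (fun z => ((1+z)*ln(1+z) - (1-z)*ln(1-z) - 2*z*ln 2) / (sqrt (1 - z*z) ^ 3)) 0 c); [lra| intros z Hz; apply chord_quotient_deriv; lra|].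
    intros z Hz. assert (0 < sqrt (1 - z*z)) by (apply sqrt_lt_R0; nra).
    apply Rdiv_le_0_compat; [pose proof (Phi_odd_part_ge z); lra|].
    apply pow_lt; lra. }
  rewrite HM0 in HM. unfold M in HM.
  apply Rmult_le_compat_r with (r := sqrt (1 - c*c)) in HM; [|lra].
  unfold Rdiv in HM. rewrite Rmult_assoc, Rinv_l in HM; lra.
Qed.

(* For fixed t > 0 the gap Phi (sqrt (y^2 + t^2)) - Phi y is nondecreasing in y,
   because the slope dPhi y / y is. *)
Lemma Phi_gap_nondecreasing (t x y : R) : 0 < t -> 0 <= x <= y -> y*y + t*t < 1 ->
  Phi (sqrt (x*x + t*t)) - Phi x <= Phi (sqrt (y*y + t*t)) - Phi y.
Proof.
  intros Ht Hxy Hy.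
  apply (nondecreasing_of_deriv (fun y => Phi (sqrt (y*y + t*t)) - Phi y)
           (fun y => dPhi (sqrt (y*y + t*t)) * (y / sqrt (y*y + t*t)) - dPhi y)); [lra| |].
  - intros z Hz. assert (0 < z*z + t*t) by nra.
    assert (0 < sqrt (z*z + t*t)) by (apply sqrt_lt_R0; lra).
    assert (sqrt (z*z + t*t) < 1) by (rewrite <- sqrt_1; apply sqrt_lt_1; nra).
    unfold Phi, dPhi. auto_derive.
    + repeat split; nra.
    + replace (1 + - z) with (1 - z) by ring.
      replace (1 + - sqrt (z*z + t*t)) with (1 - sqrt (z*z + t*t)) by ring.
      field. repeat split; nra.
  - intros z Hz. set (r := sqrt (z*z + t*t)).
    assert (0 < r) by (apply sqrt_lt_R0; nra).
    assert (r < 1) by (rewrite <- sqrt_1; apply sqrt_lt_1; nra).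
    destruct (Req_dec z 0) as [->|Hz0]; [rewrite dPhi_0; lra|].
    assert (Hzr : z <= r).
    { unfold r. rewrite <- (sqrt_square z) at 1 by lra. apply sqrt_le_1_alt. nra. }
    pose proof (dPhi_slope_nondecreasing z r ltac:(lra) ltac:(lra)).
    replace (dPhi r * (z / r) - dPhi z) with (z * (dPhi r / r - dPhi z / z)) by (field; lra).
    apply Rmult_le_pos; lra.
Qed.

(* Move x up to y = sqrt (1 - t^2 - eps), where the
   gap is at most 2 ln 2 - Phi y <= 2 ln 2 sqrt (t^2 + eps), and let eps -> 0. *)
Lemma Phi_gap_le (x R t : R) : 0 <= x <= R -> R < 1 -> 0 <= t -> x*x + t*t = R*R ->
  Phi R - Phi x <= 2 * ln 2 * t.
Proof.
  intros Hx HR Ht E.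
  destruct (Req_dec t 0) as [->|Ht0].
  { assert (R = x) by nra. subst; lra. }
  assert (HRt : R = sqrt (x*x + t*t)) by (rewrite E, sqrt_square; lra).
  pose proof ln2_pos.
  apply (le_of_le_sqrt_eps _ _ _ (1 - t*t - x*x)); [lra|lra|nra|].
  intros eps He1 He2.
  set (y := sqrt (1 - t*t - eps)).
  assert (Hyy : y * y = 1 - t*t - eps) by (unfold y; apply sqrt_sqrt; nra).
  assert (Hy0 : 0 <= y) by (unfold y; apply sqrt_pos).
  assert (Hxy : x <= y).
  { unfold y. rewrite <- (sqrt_square x) by lra. apply sqrt_le_1_alt. nra. }
  pose proof (Phi_gap_nondecreasing t x y ltac:(lra) (conj (proj1 Hx) Hxy) ltac:(lra)) as Hgap.
  rewrite <- HRt in Hgap.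
  assert (sqrt (y*y + t*t) < 1) by (rewrite <- sqrt_1; apply sqrt_lt_1; nra).
  assert (Phi (sqrt (y*y + t*t)) <= 2 * ln 2) by (apply Phi_le_2ln2; split; [apply sqrt_pos|lra]).
  pose proof (Phi_ge_circle y ltac:(nra)) as Hcirc.
  replace (1 - y*y) with (t*t + eps) in Hcirc by lra. lra.
Qed.

(* Entropy (in bits) of the two-point distribution ((1+y)/2, (1-y)/2): this is
   the von Neumann entropy of a qubit state with Bloch vector of length y. *)
Definition Hbin (y : R) : R := - (eta ((1+y)/2) + eta ((1-y)/2)).

Lemma Hbin_Phi (y : R) : 0 <= y < 1 -> Hbin y = 1 - Phi y / (2 * ln 2).
Proof.
  intros Hy. pose proof ln2_pos.
  assert (Heta : forall z, 0 < z -> eta z = z * (ln z / ln 2)).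
  { intros z Hz. unfold eta, log2. destruct (Rle_dec z 0); lra. }
  unfold Hbin, Phi. rewrite !Heta by lra. unfold Rdiv.
  rewrite !ln_mult, !ln_Rinv by lra. field. lra.
Qed.

Lemma Hbin_1 : Hbin 1 = 0.
Proof.
  unfold Hbin. replace ((1+1)/2) with 1 by field. replace ((1-1)/2) with 0 by field.
  unfold eta, log2. destruct (Rle_dec 1 0); [lra|]. destruct (Rle_dec 0 0); [|lra].
  rewrite ln_1. field. pose proof ln2_pos; lra.
Qed.

Lemma Hbin_gap (x R t : R) : 0 <= x <= R -> R <= 1 -> 0 <= t -> x*x + t*t = R*R ->
  0 <= Hbin x - Hbin R <= t.
Proof.
  intros Hx HR Ht E. pose proof ln2_pos.
  assert (Hbits : forall u v, 0 <= u - v <= 2 * ln 2 * t ->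
             0 <= (1 - v / (2 * ln 2)) - (1 - u / (2 * ln 2)) <= t).
  { intros u v Huv. unfold Rdiv.
    split; apply Rmult_le_reg_r with (r := 2 * ln 2); field_simplify; lra. }
  destruct (Req_dec R 1) as [->|HR1].
  - destruct (Req_dec x 1) as [->|Hx1]; [lra|].
    replace (Hbin 1) with (1 - 2 * ln 2 / (2 * ln 2)) by (rewrite Hbin_1; field; lra).
    rewrite Hbin_Phi by lra. apply Hbits.
    pose proof (Phi_le_2ln2 x ltac:(lra)).
    pose proof (Phi_ge_circle x ltac:(lra)) as Hcirc.
    replace (1 - x*x) with (t*t) in Hcirc by lra. rewrite sqrt_square in Hcirc by lra.
    lra.
  - rewrite !Hbin_Phi by lra. apply Hbits.
    pose proof (Phi_nondecreasing x R Hx ltac:(lra)).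
    pose proof (Phi_gap_le x R t Hx ltac:(lra) Ht E). lra.
Qed.

Definition hmat (a b x y : R) : Mat2 := mkM (mkC a 0) (mkC x y) (mkC x (-y)) (mkC b 0).

Lemma hmat_of_hermitian (A : Mat2) : hermitian A ->
  A = hmat (re (m00 A)) (re (m11 A)) (re (m01 A)) (im (m01 A)).
Proof.
  intros H. pose proof (H false false) as H00. pose proof (H true true) as H11.
  pose proof (H true false) as H10. simpl in *.
  destruct A as [[a a'] [x y] [z w] [b b']]; unfold hmat, Cconj in *; simpl in *.
  injection H00; injection H11; injection H10; intros; subst.
  repeat f_equal; lra.
Qed.

Lemma psd_hmat_coeffs (a b x y : R) : psd (hmat a b x y) ->
  0 <= a /\ 0 <= b /\ x*x + y*y <= a*b.
Proof.
  intros [_ H].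
  pose proof (H (mkV C1 C0)) as H1. pose proof (H (mkV C0 C1)) as H2.
  pose proof (H (mkV (mkC (-x) (-y)) (mkC a 0))) as H3.
  pose proof (H (mkV (mkC b 0) (mkC (-x) y))) as H4.
  pose proof (H (mkV (mkC (-x) (-y)) C1)) as H5.
  unfold braket, hmat, C1, C0, Cmul, Cadd, Cconj in *; simpl in *.
  ring_simplify in H1. ring_simplify in H2.
  assert (E3 : 0 <= a * (a*b - (x*x+y*y))) by (ring_simplify; ring_simplify in H3; lra).
  assert (E4 : 0 <= b * (a*b - (x*x+y*y))) by (ring_simplify; ring_simplify in H4; lra).
  assert (E5 : 0 <= a * (x*x+y*y) + b - 2*(x*x+y*y)) by (ring_simplify; ring_simplify in H5; lra).
  split; [lra|split; [lra|]].
  destruct (Rle_lt_or_eq_dec 0 a H1) as [Ha|<-].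
  - apply Rmult_le_reg_l with a; nra.
  - destruct (Rle_lt_or_eq_dec 0 b H2) as [Hb|<-].
    + apply Rmult_le_reg_l with b; nra.
    + nra.
Qed.

(* Unnormalised Bloch coordinates: bloch j A = Re tr (sigma_j A) for Hermitian A. *)
Definition bloch (j : setting) (A : Mat2) : R :=
  match j with
  | s1 => 2 * re (m01 A)
  | s2 => -2 * im (m01 A)
  | s3 => re (m00 A) - re (m11 A) end.

Definition perp1 (k : setting) : setting := match k with s1 => s2 | s2 => s1 | s3 => s1 end.
Definition perp2 (k : setting) : setting := match k with s1 => s3 | s2 => s3 | s3 => s2 end.

Definition perp_norm (k : setting) (A : Mat2) : R :=
  sqrt (bloch (perp1 k) A * bloch (perp1 k) A + bloch (perp2 k) A * bloch (perp2 k) A).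

Definition bloch_len (A : Mat2) : R :=
  sqrt (bloch s1 A * bloch s1 A + bloch s2 A * bloch s2 A + bloch s3 A * bloch s3 A).

Lemma perp_norm_nonneg (k : setting) (A : Mat2) : 0 <= perp_norm k A.
Proof. apply sqrt_pos. Qed.

Lemma bloch_split (k : setting) (A : Mat2) :
  bloch s1 A * bloch s1 A + bloch s2 A * bloch s2 A + bloch s3 A * bloch s3 A =
  bloch k A * bloch k A
  + (bloch (perp1 k) A * bloch (perp1 k) A + bloch (perp2 k) A * bloch (perp2 k) A).
Proof. destruct k; simpl; ring. Qed.

Lemma bloch_sq_le_1 (a b x y : R) : a + b = 1 -> x*x + y*y <= a*b ->
  bloch s1 (hmat a b x y) * bloch s1 (hmat a b x y)
  + bloch s2 (hmat a b x y) * bloch s2 (hmat a b x y)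
  + bloch s3 (hmat a b x y) * bloch s3 (hmat a b x y) <= 1.
Proof.
  intros Htr Hxy. simpl.
  assert (E : (a-b)*(a-b) = 1 - 4*a*b) by (replace b with (1 - a) by lra; ring). lra.
Qed.

Lemma inv_sqrt2_sq : (/ sqrt 2) ^ 2 = / 2.
Proof. simpl. rewrite Rmult_1_r, <- Rinv_mult, sqrt_sqrt; lra. Qed.
Lemma inv_sqrt2_pow4 : (/ sqrt 2) ^ 4 = / 4.
Proof. replace 4%nat with (2*2)%nat by reflexivity. rewrite pow_mult, inv_sqrt2_sq. field. Qed.

Ltac unfold_qubit := cbn [dephase Madd Mmul Mtr Mdet outer Cadd Cmul Cconj Cscal ebasis
  hmat h hi re im m00 m01 m10 m11 v0 v1 braket C1 C0 Mscal].
Ltac sqrt2_field := ring_simplify; rewrite ?inv_sqrt2_sq, ?inv_sqrt2_pow4; field.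

Lemma coh_l1_hmat (k : setting) (a b x y : R) :
  coh_l1 k (hmat a b x y) = perp_norm k (hmat a b x y).
Proof.
  assert (Hcabs : forall z N, 4 * (re z * re z + im z * im z) = N -> Cabs z = sqrt N / 2).
  { intros z N <-. unfold Cabs. rewrite sqrt_mult by nra.
    replace 4 with (2*2) by ring. rewrite sqrt_square by lra. field. }
  unfold coh_l1, perp_norm.
  rewrite !(Hcabs _ (bloch (perp1 k) (hmat a b x y) * bloch (perp1 k) (hmat a b x y) +
     bloch (perp2 k) (hmat a b x y) * bloch (perp2 k) (hmat a b x y))).

  - field.
  - destruct k; unfold bloch, perp1, perp2; unfold_qubit; sqrt2_field.
  - destruct k; unfold bloch, perp1, perp2; unfold_qubit; sqrt2_field.
Qed.

Lemma vN_of_disc (A : Mat2) (D : R) : re (Mtr A) = 1 ->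
  re (Mtr A) * re (Mtr A) - 4 * re (Mdet A) = D -> vN A = Hbin (sqrt D).
Proof. intros H1 H2. unfold vN, Hbin, eig_plus, eig_minus. rewrite H2, H1. reflexivity. Qed.

Lemma vN_hmat (a b x y : R) : a + b = 1 -> vN (hmat a b x y) = Hbin (bloch_len (hmat a b x y)).
Proof.
  intros H. apply vN_of_disc.
  - simpl. lra.
  - unfold bloch_len; simpl. replace b with (1 - a) by lra. ring.
Qed.

Lemma Mat2_ext (A B : Mat2) : re (m00 A) = re (m00 B) -> im (m00 A) = im (m00 B) ->
  re (m01 A) = re (m01 B) -> im (m01 A) = im (m01 B) ->
  re (m10 A) = re (m10 B) -> im (m10 A) = im (m10 B) ->
  re (m11 A) = re (m11 B) -> im (m11 A) = im (m11 B) -> A = B.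
Proof. destruct A as [[] [] [] []], B as [[] [] [] []]; simpl; intros; subst; reflexivity. Qed.

(* Dephasing in basis k keeps exactly the Bloch coordinate along sigma_k. *)
Definition dephased_hmat (k : setting) (a b x y : R) : Mat2 :=
  match k with
  | s1 => hmat ((a+b)/2) ((a+b)/2) x 0
  | s2 => hmat ((a+b)/2) ((a+b)/2) 0 y
  | s3 => hmat a b 0 0 end.

Lemma dephase_hmat (k : setting) (a b x y : R) :
  dephase k (hmat a b x y) = dephased_hmat k a b x y.
Proof. destruct k; apply Mat2_ext; unfold dephased_hmat; unfold_qubit; sqrt2_field. Qed.

Lemma vN_dephase_hmat (k : setting) (a b x y : R) : a + b = 1 ->
  vN (dephase k (hmat a b x y)) = Hbin (Rabs (bloch k (hmat a b x y))).
Proof.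
  intros H. rewrite <- sqrt_Rsqr_abs. unfold Rsqr. rewrite dephase_hmat. apply vN_of_disc.
  - destruct k; simpl; lra.
  - replace b with (1 - a) by lra. destruct k; simpl; field.
Qed.

Lemma coh_r_hmat (k : setting) (a b x y : R) : a + b = 1 ->
  coh_r k (hmat a b x y) =
  Hbin (Rabs (bloch k (hmat a b x y))) - Hbin (bloch_len (hmat a b x y)).
Proof. intros H. unfold coh_r. rewrite vN_dephase_hmat, vN_hmat; auto. Qed.

Lemma coh_le_perp_norm (alpha : cmeasure) (k : setting) (a b x y : R) :
  a + b = 1 -> x*x + y*y <= a*b ->
  0 <= coh alpha k (hmat a b x y) <= perp_norm k (hmat a b x y).
Proof.
  intros Htr Hpos. destruct alpha; simpl.
  - rewrite coh_l1_hmat. split; [apply perp_norm_nonneg | lra].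
  - rewrite coh_r_hmat by exact Htr.
    set (A := hmat a b x y). set (c := bloch k A).
    set (T := bloch (perp1 k) A * bloch (perp1 k) A + bloch (perp2 k) A * bloch (perp2 k) A).
    assert (HT : 0 <= T) by (unfold T; nra).
    pose proof (bloch_split k A) as Hsplit. fold c T in Hsplit.
    pose proof (bloch_sq_le_1 a b x y Htr Hpos) as Hle1. fold A in Hle1.
    apply (Hbin_gap (Rabs c) (bloch_len A) (perp_norm k A)).
    + split; [apply Rabs_pos|]. unfold bloch_len. rewrite Hsplit, <- sqrt_Rsqr_abs.
      apply sqrt_le_1_alt. unfold Rsqr. lra.
    + unfold bloch_len. rewrite <- sqrt_1. apply sqrt_le_1_alt. lra.
    + apply perp_norm_nonneg.
    + unfold bloch_len, perp_norm. fold T. rewrite !sqrt_sqrt by nra.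
      rewrite <- Rabs_mult, Rabs_pos_eq by nra. lra.
Qed.

Lemma bloch_add (j : setting) (A B : Mat2) : bloch j (Madd A B) = bloch j A + bloch j B.
Proof. destruct j; simpl; ring. Qed.
Lemma bloch_scal (j : setting) (r : R) (A : Mat2) : bloch j (Mscal r A) = r * bloch j A.
Proof. destruct j; simpl; ring. Qed.
Lemma bloch_zero (j : setting) : bloch j Mzero = 0.
Proof. destruct j; simpl; ring. Qed.

Lemma norm2_triangle (a b c d : R) :
  sqrt ((a+c)*(a+c) + (b+d)*(b+d)) <= sqrt (a*a+b*b) + sqrt (c*c+d*d).
Proof.
  set (u := sqrt (a*a+b*b)). set (v := sqrt (c*c+d*d)).
  assert (Hu : u * u = a*a+b*b) by (apply sqrt_sqrt; nra).
  assert (Hv : v * v = c*c+d*d) by (apply sqrt_sqrt; nra).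
  assert (Huv : u * v = sqrt ((a*a+b*b)*(c*c+d*d))) by (symmetry; apply sqrt_mult; nra).
  assert (Hcs : a*c + b*d <= u * v).
  { rewrite Huv. destruct (Rle_dec (a*c+b*d) 0); [pose proof (sqrt_pos ((a*a+b*b)*(c*c+d*d))); lra|].
    rewrite <- (sqrt_square (a*c+b*d)) by lra. apply sqrt_le_1_alt.
    pose proof (Rle_0_sqr (a*d-b*c)); unfold Rsqr in *; nra. }
  assert (0 <= u) by apply sqrt_pos. assert (0 <= v) by apply sqrt_pos.
  rewrite <- (sqrt_square (u + v)) by lra. apply sqrt_le_1_alt. nra.
Qed.

Lemma perp_norm_add (k : setting) (A B : Mat2) :
  perp_norm k (Madd A B) <= perp_norm k A + perp_norm k B.
Proof. unfold perp_norm. rewrite !bloch_add. apply norm2_triangle. Qed.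

Lemma perp_norm_scal (k : setting) (r : R) (A : Mat2) : 0 <= r ->
  perp_norm k (Mscal r A) = r * perp_norm k A.
Proof.
  intros Hr. unfold perp_norm. rewrite !bloch_scal.
  set (p := bloch (perp1 k) A). set (q := bloch (perp2 k) A).
  replace (r*p*(r*p) + r*q*(r*q)) with ((r*r) * (p*p + q*q)) by ring.
  rewrite sqrt_mult by nra. rewrite sqrt_square; auto.
Qed.

Lemma perp_norm_Msum (k : setting) (n : nat) (f : nat -> Mat2) :
  perp_norm k (Msum n f) <= Rsum n (fun l => perp_norm k (f l)).
Proof.
  induction n as [|n IH]; simpl.
  - unfold perp_norm. rewrite !bloch_zero, Rmult_0_l, Rplus_0_l, sqrt_0. lra.
  - pose proof (perp_norm_add k (Msum n f) (f n)). lra.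
Qed.

Lemma Mscal_hmat (r a b x y : R) : Mscal r (hmat a b x y) = hmat (r*a) (r*b) (r*x) (r*y).
Proof. unfold Mscal, Cscal, hmat; simpl. repeat f_equal; ring. Qed.

(* The weighted coherence p C_k(M / p) of a positive matrix M with trace p is
   at most perp_norm k M; this is the form in which coherence enters S. *)
Lemma weighted_coh_le_perp_norm (alpha : cmeasure) (k : setting) (M : Mat2) : psd M ->
  0 <= re (Mtr M) * coh alpha k
         (if Req_EM_T (re (Mtr M)) 0 then Mzero else Mscal (/ re (Mtr M)) M)
    <= perp_norm k M.
Proof.
  intros Hpsd. pose proof (hmat_of_hermitian M (proj1 Hpsd)) as HM.
  rewrite HM in Hpsd |- *. destruct (psd_hmat_coeffs _ _ _ _ Hpsd) as [Ha [Hb Hxy]].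
  set (a := re (m00 M)) in *. set (b := re (m11 M)) in *.
  set (x := re (m01 M)) in *. set (y := im (m01 M)) in *.
  replace (re (Mtr (hmat a b x y))) with (a + b) by (simpl; ring).
  destruct (Req_EM_T (a+b) 0) as [->|Hp].
  - rewrite Rmult_0_l. split; [lra | apply perp_norm_nonneg].
  - assert (Hp0 : 0 < a + b) by lra. set (p := a + b) in *.
    assert (Hinv : 0 < / p) by (apply Rinv_0_lt_compat; lra).
    destruct (coh_le_perp_norm alpha k (/p*a) (/p*b) (/p*x) (/p*y)) as [Hlo Hhi].
    + unfold p in *. field. lra.
    + replace (/p*x*(/p*x) + /p*y*(/p*y)) with (/p * /p * (x*x+y*y)) by ring.
      replace (/p*a*(/p*b)) with (/p * /p * (a*b)) by ring.
      apply Rmult_le_compat_l; nra.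
    + rewrite <- Mscal_hmat in Hlo, Hhi. rewrite perp_norm_scal in Hhi by lra.
      split; [nra|].
      apply Rmult_le_compat_l with (r := p) in Hhi; [|lra].
      replace (p * (/p * perp_norm k (hmat a b x y))) with (perp_norm k (hmat a b x y))
        in Hhi by (field; lra).
      exact Hhi.
Qed.

Lemma Rsum_ext (n : nat) (f g : nat -> R) :
  (forall l, (l < n)%nat -> f l = g l) -> Rsum n f = Rsum n g.
Proof. induction n; intros H; simpl; auto. rewrite IHn, H; auto; intros; apply H; lia. Qed.

Lemma Rsum_le (n : nat) (f g : nat -> R) :
  (forall l, (l < n)%nat -> f l <= g l) -> Rsum n f <= Rsum n g.
Proof.
  induction n as [|n IH]; intros H; simpl; [lra|].
  assert (Rsum n f <= Rsum n g) by (apply IH; intros; apply H; lia).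
  assert (f n <= g n) by (apply H; lia). lra.
Qed.

Lemma Rsum_plus (n : nat) (f g : nat -> R) : Rsum n (fun l => f l + g l) = Rsum n f + Rsum n g.
Proof. induction n; simpl; [ring|]. rewrite IHn; ring. Qed.

Lemma Rsum_scal (n : nat) (c : R) (f : nat -> R) : Rsum n (fun l => c * f l) = c * Rsum n f.
Proof. induction n; simpl; [ring|]. rewrite IHn; ring. Qed.

Lemma Rsum_nonneg (n : nat) (f : nat -> R) : (forall l, (l < n)%nat -> 0 <= f l) -> 0 <= Rsum n f.
Proof.
  intros H. replace 0 with (Rsum n (fun _ => 0)) by (clear H; induction n; simpl; [|rewrite IHn]; ring).
  apply Rsum_le; auto.
Qed.

(* Jensen's inequality for the square: (E f)^2 <= E (f^2) for a probability vector P,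
   since the variance E ((f - E f)^2) is nonnegative. *)
Lemma Rsum_mean_sq_le (n : nat) (P f : nat -> R) :
  (forall l, (l < n)%nat -> 0 <= P l) -> Rsum n P = 1 ->
  Rsum n (fun l => P l * f l) * Rsum n (fun l => P l * f l)
    <= Rsum n (fun l => P l * (f l * f l)).
Proof.
  intros HP H1. set (m := Rsum n (fun l => P l * f l)).
  assert (Hvar : 0 <= Rsum n (fun l => P l * ((f l - m) * (f l - m)))).
  { apply Rsum_nonneg. intros l Hl. apply Rmult_le_pos; [apply HP; exact Hl | apply Rle_0_sqr]. }
  rewrite (Rsum_ext n _ (fun l => (P l * (f l * f l) + (-2*m) * (P l * f l)) + (m*m) * P l))
    in Hvar by (intros; ring).
  rewrite !Rsum_plus, !Rsum_scal, H1 in Hvar. fold m in Hvar. lra.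
Qed.

(* For a density matrix sum_k perp_norm_k^2 = 2 |r|^2 <= 2. *)
Lemma density_perp_norm_sq_le (A : Mat2) : density A ->
  perp_norm s1 A * perp_norm s1 A + perp_norm s2 A * perp_norm s2 A
  + perp_norm s3 A * perp_norm s3 A <= 2.
Proof.
  intros [Hpsd Htr]. pose proof (hmat_of_hermitian A (proj1 Hpsd)) as HA.
  rewrite HA in Hpsd, Htr |- *. destruct (psd_hmat_coeffs _ _ _ _ Hpsd) as [Ha [Hb Hxy]].
  apply (f_equal re) in Htr. simpl in Htr.
  set (a := re (m00 A)) in *. set (b := re (m11 A)) in *.
  set (x := re (m01 A)) in *. set (y := im (m01 A)) in *.
  pose proof (bloch_sq_le_1 a b x y Htr Hxy) as Hle1.
  unfold perp_norm. rewrite !sqrt_sqrt by nra. simpl in *. lra.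
Qed.

(* In an LHS model rho_{a|i} = sum_l P_l p(a|i,l) sigma_l, so by the seminorm
   property the two outcomes together cost at most sum_l P_l perp_norm k sigma_l. *)
Lemma lhs_outcomes_perp_norm_le (rho : Assemblage) (n : nat) (P : nat -> R)
    (pl : nat -> bool -> setting -> R) (sig : nat -> Mat2) (i k : setting) :
  (forall l, (l < n)%nat -> 0 <= P l) ->
  (forall l a x, (l < n)%nat -> 0 <= pl l a x) ->
  (forall l x, (l < n)%nat -> pl l false x + pl l true x = 1) ->
  (forall a x, rho a x = Msum n (fun l => Mscal (P l * pl l a x) (sig l))) ->
  perp_norm k (rho false i) + perp_norm k (rho true i)
    <= Rsum n (fun l => P l * perp_norm k (sig l)).
Proof.
  intros HP Hpl Hpl1 Hrho.
  assert (Hout : forall a, perp_norm k (rho a i)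
                           <= Rsum n (fun l => P l * pl l a i * perp_norm k (sig l))).
  { intros a. rewrite Hrho. eapply Rle_trans; [apply perp_norm_Msum|].
    apply Rsum_le. intros l Hl. rewrite perp_norm_scal; [lra|].
    apply Rmult_le_pos; auto. }
  assert (Hsum : Rsum n (fun l => P l * pl l false i * perp_norm k (sig l))
                 + Rsum n (fun l => P l * pl l true i * perp_norm k (sig l))
                 = Rsum n (fun l => P l * perp_norm k (sig l))).
  { rewrite <- Rsum_plus. apply Rsum_ext. intros l Hl.
    transitivity (P l * perp_norm k (sig l) * (pl l false i + pl l true i)); [ring|].
    rewrite Hpl1 by exact Hl. ring. }
  pose proof (Hout false). pose proof (Hout true). lra.
Qed.

Lemma average_perp_norm_sq_le (n : nat) (P : nat -> R) (sig : nat -> Mat2) :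
  (forall l, (l < n)%nat -> 0 <= P l) -> Rsum n P = 1 ->
  (forall l, (l < n)%nat -> density (sig l)) ->
  let Y k := Rsum n (fun l => P l * perp_norm k (sig l)) in
  Y s1 * Y s1 + Y s2 * Y s2 + Y s3 * Y s3 <= 2.
Proof.
  intros HP HP1 Hsig Y. unfold Y.
  pose proof (Rsum_mean_sq_le n P (fun l => perp_norm s1 (sig l)) HP HP1).
  pose proof (Rsum_mean_sq_le n P (fun l => perp_norm s2 (sig l)) HP HP1).
  pose proof (Rsum_mean_sq_le n P (fun l => perp_norm s3 (sig l)) HP HP1).
  assert (Rsum n (fun l => P l * (perp_norm s1 (sig l) * perp_norm s1 (sig l)))
          + Rsum n (fun l => P l * (perp_norm s2 (sig l) * perp_norm s2 (sig l)))
          + Rsum n (fun l => P l * (perp_norm s3 (sig l) * perp_norm s3 (sig l))) <= 2).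
  { rewrite <- !Rsum_plus. replace 2 with (2 * Rsum n P) by (rewrite HP1; ring).
    rewrite <- Rsum_scal. apply Rsum_le. intros l Hl.
    pose proof (density_perp_norm_sq_le (sig l) (Hsig l Hl)). pose proof (HP l Hl). nra. }
  lra.
Qed.

Lemma lhs_perp_norm_bound (rho : Assemblage) : has_LHS rho ->
  exists Y : setting -> R,
    (forall i k, perp_norm k (rho false i) + perp_norm k (rho true i) <= Y k) /\
    Y s1 * Y s1 + Y s2 * Y s2 + Y s3 * Y s3 <= 2.
Proof.
  intros [n [P [pl [sig [HP [HP1 [Hpl [Hpl1 [Hsig Hrho]]]]]]]]].
  exists (fun k => Rsum n (fun l => P l * perp_norm k (sig l))). split.
  - intros i k. now apply (lhs_outcomes_perp_norm_le rho n P pl sig).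
  - exact (average_perp_norm_sq_le n P sig HP HP1 Hsig).
Qed.

Definition pair_sum (V : bool -> setting -> setting -> R) : R :=
  sumb (fun a => sumb (fun b => sum3 (fun i => sum3 (fun j => sum3 (fun k =>
    if pw_distinct i j k then V a i k * V b j k else 0))))).

Lemma S_quantity_pair_sum (alpha : cmeasure) (rho : Assemblage) :
  S_quantity alpha rho =
  pair_sum (fun a i k => prob rho a i * coh alpha k (cond_state rho a i)).
Proof. unfold S_quantity, pair_sum, sumb, sum3, pw_distinct; simpl; ring. Qed.

Lemma pair_sum_mono (U V : bool -> setting -> setting -> R) :
  (forall a i k, 0 <= U a i k <= V a i k) -> pair_sum U <= pair_sum V.
Proof.
  intros HUV.
  assert (Hprod : forall a b i j k, U a i k * U b j k <= V a i k * V b j k).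
  { intros. destruct (HUV a i k), (HUV b j k). apply Rmult_le_compat; lra. }
  unfold pair_sum, sumb, sum3, pw_distinct; simpl.
  repeat apply Rplus_le_compat; try apply Hprod; lra.
Qed.

(* pair_sum V = 2 sum_k (sum_a V a i k)(sum_b V b j k) with {i,j,k} = {1,2,3};
   each factor is at most Y k, so pair_sum V <= 2 (Y1^2 + Y2^2 + Y3^2). *)
Lemma pair_sum_le (V : bool -> setting -> setting -> R) (Y : setting -> R) :
  (forall a i k, 0 <= V a i k) -> (forall i k, V false i k + V true i k <= Y k) ->
  Y s1 * Y s1 + Y s2 * Y s2 + Y s3 * Y s3 <= 2 -> pair_sum V <= 4.
Proof.
  intros HV HY HY2.
  set (W := fun i k => V false i k + V true i k).
  assert (HW : forall i j k, W i k * W j k <= Y k * Y k).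
  { intros. unfold W. pose proof (HV false i k); pose proof (HV true i k);
    pose proof (HV false j k); pose proof (HV true j k).
    apply Rmult_le_compat; auto; lra. }
  assert (E : pair_sum V = 2 * (W s2 s1 * W s3 s1 + W s1 s2 * W s3 s2 + W s1 s3 * W s2 s3)).
  { unfold pair_sum, W, sumb, sum3, pw_distinct; simpl; ring. }
  pose proof (HW s2 s3 s1). pose proof (HW s1 s3 s2). pose proof (HW s1 s2 s3). lra.
Qed.

Theorem proposition1 (alpha : cmeasure) (rho : Assemblage) :
  is_assemblage rho -> has_LHS rho ->
  S_quantity alpha rho <= 2 * Omega alpha.
Proof.
  intros [Hpsd _] Hlhs.
  destruct (lhs_perp_norm_bound rho Hlhs) as [Y [HY HY2]].
  rewrite S_quantity_pair_sum. unfold Omega. replace (2 * 2) with 4 by ring.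
  apply Rle_trans with (pair_sum (fun a i k => perp_norm k (rho a i))).
  - apply pair_sum_mono. intros a i k.
    exact (weighted_coh_le_perp_norm alpha k (rho a i) (Hpsd a i)).
  - apply (pair_sum_le _ Y); [intros; apply perp_norm_nonneg | exact HY | exact HY2].
Qed.
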